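(* Let $n\ge 2$ and $1\le k\le n-1$ be integers, $T>0$, and $t\in\{1,\dots,n\}$. Let $X_1,\dots,X_n$ be independent random variables each uniformly distributed on $[0,T]$, and let $$Y_{t,2}=\min\Big(X_t,\ \max\big(\mathrm{mink}(\{X_i\}_{i\neq t})\big)\Big),$$ where $\max(\mathrm{mink}(\{X_i\}_{i\neq t}))$ denotes the $k$-th smallest of the $n-1$ values $X_i$, $i\ne t$. Then $$E[Y_{t,2}]=\frac{T}{2}-\frac{(n-k)(n-k+1)T}{2n(n+1)}.$$
   Context: In an $(n,k,m)$ systematic MDS array code stored on $n$ nodes (any $k$ nodes recover all data), $X_i$ is the access latency of node $i$; $Y_{t,2}$ is the data access latency of the proposed accelerated access algorithms (AAKL/AAUL) for the data of node $t$: the minimum of directly reading node $t$ and reading the fastest $k$ nodes other than $t$ and decoding. *)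

From HB Require Import structures.
From mathcomp Require Import all_boot all_order all_algebra.
From mathcomp Require Import all_classical all_reals all_analysis.
Set Implicit Arguments. Unset Strict Implicit. Unset Printing Implicit Defensive.
Import Order.TTheory GRing.Theory Num.Theory.
Local Open Scope ring_scope.
Local Open Scope classical_set_scope.

(* Mutual independence of a finite family of real random variables:
   the joint law factorizes on every family of Borel sets
   (taking B j = setT for j outside a subfamily gives every subfamily). *)
Definition mutually_independent d (Omega : measurableType d) (R : realType)
  (P : probability Omega R) (n : nat) (X : 'I_n -> {RV P >-> R}) : Prop :=
  forall B : 'I_n -> set R, (forall i, measurable (B i)) ->
    P [set w | forall i, B i (X i w)] = (\prod_(i < n) P (X i @^-1` B i))%E.

Definition uniform_on_0T d (Omega : measurableType d) (R : realType)
  (P : probability Omega R) (T : R) (hT : 0 < T) (X : {RV P >-> R}) : Prop :=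
  forall A : set R, measurable A -> distribution P X A = uniform_prob hT A.

Definition kth_smallest (R : realType) (k : nat) (s : seq R) : R :=
  nth 0 (sort <=%R s) k.-1.

Definition Y_t2 d (Omega : measurableType d) (R : realType)
  (P : probability Omega R) (n k : nat) (X : 'I_n -> {RV P >-> R}) (t : 'I_n)
  : Omega -> R :=
  fun w => Num.min (X t w) (kth_smallest k [seq X i w | i <- enum 'I_n & i != t]).

From HB Require Import structures.
From mathcomp Require Import all_boot all_order all_algebra.
From mathcomp Require Import all_classical all_reals all_analysis.
From mathcomp Require Import measurable_realfun ring zify.
Set Implicit Arguments. Unset Strict Implicit. Unset Printing Implicit Defensive.
Import Order.TTheory GRing.Theory Num.Theory.
Local Open Scope ring_scope.

(* Y_{t,2} > T u holds exactly when X_t > T u and fewer than k of the other n - 1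
   variables are <= T u.  Splitting this event according to the set S of indices i
   with X_i <= T u and using independence gives, for u in [0, 1],
   P(Y_{t,2} > T u) = sum_{j < k} C(n-1, j) u^j (1 - u)^(n-j), while the probability
   vanishes for u >= 1.  As Y_{t,2} >= 0 almost surely,
   E[Y_{t,2}] = T * int_0^1 P(Y_{t,2} > T u) du; the Beta integrals turn the j-th term
   into C(n-1, j) j! (n-j)! / (n+1)! = (n - j) / (n (n + 1)), and summing over j < k
   yields the closed form. *)

Lemma lt_nth_sort d (T : orderType d) (x0 x : T) (s : seq T) (k : nat) :
  (k < size s)%N ->
  (x < nth x0 (sort <=%O s) k)%O = (count (<=%O^~ x) s <= k)%N.
Proof.
move=> ks; set ss := sort <=%O s.
have ss_sorted : sorted <=%O ss by apply: sort_sorted; exact: le_total.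
have kss : (k < size ss)%N by rewrite size_sort.
have le_nth i j : (i <= j < size ss)%N -> (nth x0 ss i <= nth x0 ss j)%O.
  by case/andP=> ij jss; rewrite le_sorted_leq_nth // inE (leq_ltn_trans ij jss).
have /permP <- : perm_eq ss s by rewrite perm_sort.
case: ltP => [x_lt|nth_le].
- rewrite -(cat_take_drop k ss) count_cat.
  have -> : count (<=%O^~ x) (drop k ss) = 0%N.
    apply/eqP; rewrite -leqn0 leqNgt -has_count; apply/(has_nthP x0) => -[i].
    rewrite size_drop nth_drop ltn_subRL => iss.
    by apply/negP; rewrite -ltNge (lt_le_trans x_lt) // le_nth // leq_addr.
  by rewrite addn0 (leq_trans (count_size _ _)) // size_take kss.
- apply/esym/negbTE; rewrite -ltnNge.
  rewrite -(cat_take_drop k.+1 ss) count_cat; apply: leq_trans (leq_addr _ _).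
  have /eqP -> : count (<=%O^~ x) (take k.+1 ss) == size (take k.+1 ss).
    rewrite -all_count; apply/(all_nthP x0) => i.
    rewrite size_take_min (minn_idPl kss) ltnS => ik.
    by rewrite nth_take ?ltnS // (le_trans _ nth_le) // le_nth // ik.
  by rewrite size_take_min (minn_idPl kss).
Qed.

Lemma count_enum (T : finType) (p : pred T) : count p (enum T) = #|[set x | p x]|.
Proof. by rewrite cardsE cardE -size_filter enumT /enum_mem; congr size; rewrite -enumT. Qed.

Section kth_smallest_others.
Variables (R : realType) (n : nat) (a : 'I_n -> R) (t : 'I_n).

Definition sublevel (x : R) : {set 'I_n} := [set i | a i <= x].

Let others := [seq a i | i <- enum 'I_n & i != t].

Lemma size_others : size others = n.-1.
Proof.
rewrite size_map size_filter count_enum.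
by have := cardsC1 t; rewrite card_ord => <-; apply: eq_card => i; rewrite !inE.
Qed.

Lemma lt_min_kth_smallest k x : (0 < k <= n.-1)%N ->
  (x < Num.min (a t) (kth_smallest k others)) =
  (t \notin sublevel x) && (#|sublevel x| < k)%N.
Proof.
case/andP=> k_gt0 k_le; rewrite lt_min inE -ltNge; case: ltP => //= x_lt.
have k1_lt : (k.-1 < n.-1)%N by rewrite prednK.
rewrite /kth_smallest lt_nth_sort ?size_others // -ltnS prednK //.
rewrite count_map count_filter count_enum; congr (_ < _)%N.
apply: eq_card => i; rewrite !inE /=.
by case: eqP => [->|_]; rewrite ?andbT // andbF leNgt x_lt.
Qed.

Lemma min_kth_smallest_ge0 k : (forall i, 0 <= a i) ->
  0 <= Num.min (a t) (kth_smallest k others).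
Proof.
move=> a_ge0; rewrite le_min a_ge0 /= /kth_smallest.
have [k_lt|k_ge] := ltnP k.-1 (size (sort <=%R others)); last by rewrite nth_default.
have : nth 0 (sort <=%R others) k.-1 \in others by rewrite -(mem_sort <=%R) mem_nth.
by case/mapP=> i _ ->.
Qed.

End kth_smallest_others.

Lemma prod_if_mem (R : comPzSemiRingType) (T : finType) (S : {set T}) (u v : R) :
  \prod_(i : T) (if i \in S then u else v) = u ^+ #|S| * v ^+ (#|T| - #|S|).
Proof.
have -> : (#|T| - #|S| = #|~: S|)%N by rewrite (cardsCs (~: S)) finset.setCK.
rewrite (bigID (mem S)) /= -!prodr_const; congr (_ * _); apply: eq_big => i.
- by [].
- by move=> ->.
- by rewrite inE.
- by move=> /negbTE ->.
Qed.

Lemma sum_subset_card (V : nmodType) (T : finType) (A : {set T}) (k : nat)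
    (g : nat -> V) :
  \sum_(S : {set T} | (S \subset A) && (#|S| < k)%N) g #|S| =
  \sum_(j < k) g j *+ 'C(#|A|, j).
Proof.
elim: k => [|k IH]; first by rewrite big_ord0 big_pred0 // => S; rewrite andbF.
rewrite big_ord_recr -IH (bigID (fun S : {set T} => (#|S| < k)%N)) /=.
congr (_ + _).
  apply: eq_bigl => S; rewrite -andbA.
  by case: (ltnP #|S| k) => S_k; rewrite ?andbF // andbT ltnS (ltnW S_k) andbT.
rewrite -(cards_draws A k) -sumr_const; apply: eq_big => [S|S].
  by rewrite finset.in_set -andbA ltnS -leqNgt -eqn_leq.
by case/andP=> /andP[_ S_le] S_ge; congr g; apply/eqP; rewrite eqn_leq -ltnS S_le leqNgt.
Qed.

Local Open Scope classical_set_scope.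

Lemma uniform_probE (R : realType) (a b : R) (ab : a < b) (A : set R) :
  measurable A ->
  (uniform_prob ab A = ((b - a)^-1)%:E * lebesgue_measure (A `&` `[a, b]))%E.
Proof.
move=> mA; rewrite /uniform_prob integral_uniform_pdf -integral_cst //; last first.
  exact: measurableI.
by apply: eq_integral => x; rewrite inE => -[_]; rewrite /= in_itv /uniform_pdf /= => ->.
Qed.

Section uniform_on_0T.
Context d (Omega : measurableType d) (R : realType) (P : probability Omega R).
Variables (T : R) (hT : 0 < T) (X : {RV P >-> R}).
Hypothesis X_unif : uniform_on_0T hT X.

Lemma uniform_on_0T_prob (A : set R) : measurable A ->
  P (X @^-1` A) = ((T^-1)%:E * lebesgue_measure (A `&` `[0%R, T]))%E.
Proof.
by move=> mA; rewrite -[P _]/(distribution P X A) X_unif // uniform_probE // subr0.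
Qed.

Lemma uniform_on_0T_null (A : set R) : measurable A -> A `&` `[0, T] = set0 ->
  P (X @^-1` A) = 0%E.
Proof. by move=> mA A0; rewrite uniform_on_0T_prob // A0 measure0 mule0. Qed.

Lemma uniform_on_0T_le (x : R) : 0 <= x <= T ->
  P (X @^-1` `]-oo, x]) = (x / T)%:E.
Proof.
case/andP=> x_ge0 x_le; rewrite uniform_on_0T_prob //.
have -> : `]-oo, x] `&` `[0, T] = `[0, x].
  apply/seteqP; split => y /=; rewrite !in_itv /= ?andbT.
    by move=> [-> /andP[->]].
  by case/andP=> y_ge0 y_le; rewrite y_le y_ge0 (le_trans y_le x_le).
rewrite lebesgue_measure_itv /= lte_fin; case: ltgtP x_ge0 => // [x_gt0|<-] _.
- by rewrite oppr0 adde0 -EFinM mulrC.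
- by rewrite mule0 mul0r.
Qed.

Lemma uniform_on_0T_gt (x : R) : 0 <= x <= T ->
  P (X @^-1` `]x, +oo[) = (1 - x / T)%:E.
Proof.
case/andP=> x_ge0 x_le; rewrite uniform_on_0T_prob //.
have -> : `]x, +oo[ `&` `[0, T] = `]x, T].
  apply/seteqP; split => y /=; rewrite !in_itv /= ?andbT.
    by move=> [-> /andP[]].
  by case/andP=> x_lt ->; rewrite (le_trans x_ge0 (ltW x_lt)).
rewrite lebesgue_measure_itv /= lte_fin.
have T_neq0 : T != 0 by rewrite gt_eqF.
case: ltgtP x_le => // [x_lt|->] _.
- by rewrite -EFinD -EFinM mulrBr mulVf // mulrC.
- by rewrite mule0 divff // subrr.
Qed.

Lemma uniform_on_0T_ge0_ae : {ae P, forall w, 0 <= X w}.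
Proof.
exists (X @^-1` `]-oo, 0[); split.
- exact: measurable_funPTI.
- apply: uniform_on_0T_null => //; apply/seteqP; split => // y [/=].
  by rewrite !in_itv /= => /lt_geF ->.
- by move=> w /= /negP; rewrite in_itv /= -ltNge.
Qed.

End uniform_on_0T.

Lemma preimage_fibres (aT rT : Type) (f : aT -> rT) (A : set rT) :
  f @^-1` A = \bigcup_(y in A) f @^-1` [set y].
Proof. by apply/seteqP; split => [w Afw|w [y Ay /= ->]] //; exists (f w). Qed.

Lemma measure_preimage_fin d (Omega : measurableType d) (R : realType)
    (mu : {measure set Omega -> \bar R}) (I : finType) (f : Omega -> I)
    (A : {pred I}) :
  (forall i, measurable (f @^-1` [set i])) ->
  mu (f @^-1` [set` A]) = (\sum_(i in A) mu (f @^-1` [set i]))%E.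
Proof.
move=> mf; rewrite preimage_fibres measure_fin_bigcup //; last first.
  by move=> i j _ _ [w [/= -> ->]].
rewrite -(bigfs _ (r := index_enum I)) // => [|i _].
  exact: index_enum_uniq.
by rewrite mem_index_enum.
Qed.

Lemma expectation_ccdf_scaled d (Omega : measurableType d) (R : realType)
    (P : probability Omega R) (Y : Omega -> R) (c : R) :
  0 < c -> measurable_fun setT Y -> {ae P, forall w, 0 <= Y w} ->
  ('E_P[Y] = c%:E * \int[lebesgue_measure]_(r in `[0%R, +oo[)
                      P (Y @^-1` `](c * r)%R, +oo[))%E.
Proof.
move=> c_gt0 mY Y_ge0.
(* Y / c, made nonnegative everywhere so that the tail formula for nonnegative
   random variables applies; it still equals Y / c almost surely. *)
pose V w := Num.max (Y w) 0 / c.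
have mV : measurable_fun setT V.
  by apply: measurable_funM => //; apply: measurable_maxr.
have V_ge0 w : 0 <= V w by rewrite divr_ge0 ?le_max ?lexx ?orbT ?ltW.
have Y_cV : {ae P, forall w, setT w -> (Y w)%:E = (c * V w)%:E}.
  apply: filterS Y_ge0 => w Yw_ge0 _.
  by rewrite /V max_l // mulrCA divff ?mulr1 ?gt_eqF.
have VP : V \in mfun by rewrite inE.
pose VR : {RV P >-> R} := mfun_Sub VP.
rewrite unlock (ae_eq_integral _ _ measurableT _ _ Y_cV); last 2 first.
- exact/measurable_EFinP.
- by apply/measurable_EFinP; apply: measurable_funM.
under eq_integral do rewrite EFinM.
rewrite ge0_integralZl ?lee_fin ?ltW //; last 2 first.
- exact/measurable_EFinP.
- by move=> w _; rewrite lee_fin.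
have -> : (\int[P]_w (V w)%:E = 'E_P[VR])%E by rewrite unlock.
rewrite ge0_expectation_ccdf; last by move=> w; rewrite /VR mfun_valP.
congr (_ * _)%E; apply: eq_integral => r; rewrite inE /= in_itv /= andbT => r_ge0.
have cr_ge0 : 0 <= c * r := mulr_ge0 (ltW c_gt0) r_ge0.
rewrite /ccdf /distribution /pushforward; congr (P _); apply: eq_set => w /=.
rewrite !in_itv /= !andbT /V ltr_pdivlMr // [r * c]mulrC lt_max.
by rewrite [_ < 0]ltNge cr_ge0 orbF.
Qed.

Definition level_itv (R : realType) n (S : {set 'I_n}) (x : R) (i : 'I_n) : set R :=
  if i \in S then `]-oo, x] else `]x, +oo[.

Definition Y_t2_tail (R : pzRingType) (n k : nat) (u : R) : R :=
  \sum_(j < k) 'C(n.-1, j)%:R * (u ^+ j * (1 - u) ^+ (n - j)).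

Section Y_t2_events.
Context d (Omega : measurableType d) (R : realType) (P : probability Omega R).
Variables (n k : nat) (t : 'I_n) (X : 'I_n -> {RV P >-> R}).

Let level (x : R) (w : Omega) : {set 'I_n} := sublevel (fun i => X i w) x.

Lemma level_fibreE x S :
  level x @^-1` [set S] = [set w | forall i, level_itv S x i (X i w)].
Proof.
apply/seteqP; split => w /=.
  by move=> <- i; rewrite /level_itv inE /=; case: leP => /= h; rewrite in_itv /= ?andbT.
move=> in_itv_w; apply/setP => i; rewrite inE /=; have := in_itv_w i.
rewrite /level_itv; case: (i \in S); rewrite /= in_itv /= ?andbT; first by [].
exact: lt_geF.
Qed.

Lemma measurable_level_fibre x S : measurable (level x @^-1` [set S]).
Proof.
rewrite level_fibreE; have -> : [set w | forall i, level_itv S x i (X i w)] =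
    \bigcap_(i in [set: 'I_n]) X i @^-1` level_itv S x i.
  by apply/seteqP; split => w /= in_itv_w i; [move=> _|]; exact: in_itv_w.
apply: fin_bigcap_measurable => [|i _]; first exact: finite_finset.
by apply: measurable_funPTI; rewrite /level_itv; case: (i \in S).
Qed.

Hypothesis k_range : (0 < k <= n.-1)%N.

Lemma Y_t2_gtE x : Y_t2 k X t @^-1` `]x, +oo[ =
  level x @^-1` [set S : {set 'I_n} | (t \notin S) && (#|S| < k)%N].
Proof.
apply/seteqP; split => w /=; rewrite in_itv /= andbT;
  by rewrite /Y_t2 (lt_min_kth_smallest (fun i => X i w)).
Qed.

Lemma measurable_Y_t2 : measurable_fun setT (Y_t2 k X t).
Proof.
apply: (measurability _ (RGenOInfty.measurableE R)) => //.
move=> _ [_ [x ->] <-]; rewrite setTI Y_t2_gtE preimage_fibres.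
apply: fin_bigcup_measurable => [|S _]; first exact: finite_finset.
exact: measurable_level_fibre.
Qed.

Variables (T : R) (hT : 0 < T).
Hypothesis X_unif : forall i, uniform_on_0T hT (X i).

Lemma Y_t2_ge0_ae : {ae P, forall w, 0 <= Y_t2 k X t w}.
Proof.
have : {ae P, forall w i, 0 <= X i w}.
  by apply: filter_forall => i; exact: uniform_on_0T_ge0_ae (X_unif i).
by apply: filterS => w X_ge0; exact: min_kth_smallest_ge0.
Qed.

Lemma prob_Y_t2_gt_ge1 u : 1 <= u -> P (Y_t2 k X t @^-1` `]T * u, +oo[) = 0%E.
Proof.
move=> u_ge1; apply: (@subset_measure0 _ _ _ P _ (X t @^-1` `]T * u, +oo[)).
- by rewrite -[X in measurable X]setTI; apply: measurable_Y_t2.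
- exact: measurable_funPTI.
- by move=> w /=; rewrite !in_itv /= !andbT lt_min => /andP[].
apply: (uniform_on_0T_null (X_unif t)) => //; apply/seteqP; split => // y [/=].
rewrite !in_itv /= andbT => Tu_lt /andP[_ y_le]; move: (lt_le_trans Tu_lt y_le).
by rewrite ltNge ler_peMr // ltW.
Qed.

Hypothesis X_indep : mutually_independent X.

Lemma prob_level_fibre u S : 0 <= u <= 1 ->
  P (level (T * u) @^-1` [set S]) = (u ^+ #|S| * (1 - u) ^+ (n - #|S|))%:E.
Proof.
case/andP=> u_ge0 u_le1.
have Tu_range : 0 <= T * u <= T.
  by rewrite mulr_ge0 ?(ltW hT) //= -[leRHS]mulr1 ler_wpM2l ?(ltW hT).
have TuT : T * u / T = u by rewrite mulrC mulKf // gt_eqF.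
rewrite (level_fibreE (T * u) S) X_indep => [|i]; last first.
  by rewrite /level_itv; case: (i \in S).
rewrite -[n in (n - _)%N]card_ord -prod_if_mem -prodEFin.
apply: eq_bigr => i _; rewrite /level_itv; case: (i \in S).
- by rewrite (uniform_on_0T_le (X_unif i)) // TuT.
- by rewrite (uniform_on_0T_gt (X_unif i)) // TuT.
Qed.

Lemma prob_Y_t2_gt u : 0 <= u <= 1 ->
  P (Y_t2 k X t @^-1` `]T * u, +oo[) = (Y_t2_tail n k u)%:E.
Proof.
move=> u_range; rewrite Y_t2_gtE.
pose small : {pred {set 'I_n}} := fun S => (t \notin S) && (#|S| < k)%N.
rewrite -[[set S | _]]/[set` small] measure_preimage_fin; last first.
  exact: measurable_level_fibre.
rewrite (eq_bigr (fun S : {set 'I_n} => (u ^+ #|S| * (1 - u) ^+ (n - #|S|))%:E));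
  last by move=> S _; exact: prob_level_fibre.
rewrite sumEFin /Y_t2_tail; congr EFin; symmetry.
have := cardsC1 t; rewrite card_ord => <-.
under eq_bigr do rewrite mulr_natl.
rewrite -(sum_subset_card _ _ (fun j => u ^+ j * (1 - u) ^+ (n - j))).
apply: eq_bigl => S /=; congr andb.
apply/fintype.subsetP/idP => [sub|tS i iS].
  by apply/negP => /sub; rewrite !inE eqxx.
by rewrite !inE; apply: contraNneq tS => <-.
Qed.

Lemma integral_prob_Y_t2_gt :
  (\int[lebesgue_measure]_(r in `[0%R, +oo[)
      P (Y_t2 k X t @^-1` `](T * r)%R, +oo[) =
   \int[lebesgue_measure]_(r in `[0%R, 1%R]) (Y_t2_tail n k r)%:E)%E.
Proof.
have -> : `[0%R, 1%R] = `[0%R, +oo[ `&` `[0%R, 1%R] :> set R.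
  by apply/esym/setIidr => r /=; rewrite !in_itv /= andbT => /andP[].
rewrite integral_mkcondr; apply: eq_integral => r.
rewrite inE /= in_itv /= andbT => r_ge0; rewrite patchE; case: ifPn => [|r_notin].
  by rewrite inE /= in_itv /= r_ge0 => r_le1; rewrite prob_Y_t2_gt ?r_ge0.
apply: prob_Y_t2_gt_ge1; apply: ltW; move: r_notin.
by rewrite notin_setE /= in_itv /= r_ge0 /= ltNge => /negP.
Qed.

End Y_t2_events.

Lemma integral_XMonemX (R : realType) (a b : nat) :
  (\int[lebesgue_measure]_(u in `[0%R, 1%R]) (u ^+ a * (1 - u) ^+ b)%:E =
   ((a`! * b`!)%:R / (a + b).+1`!%:R)%:E :> \bar R)%E.
Proof.
rewrite -beta_fun_fact EFin_beta_fun integral_mkcond /=.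
by apply: eq_integral => x _; rewrite /patch; case: ifP.
Qed.

Lemma integral_Y_t2_tail (R : realType) (n k : nat) :
  (\int[lebesgue_measure]_(u in `[0%R, 1%R]) (Y_t2_tail n k u)%:E =
   (\sum_(j < k) 'C(n.-1, j)%:R * ((j`! * (n - j)`!)%:R / (j + (n - j)).+1`!%:R))%:E
   :> \bar R)%E.
Proof.
have mX j : measurable_fun setT (fun u : R => u ^+ j * (1 - u) ^+ (n - j)).
  by apply: measurable_funM; apply: measurable_funX => //; apply: measurable_funB.
have X_ge0 j (u : R) : `[0%R, 1%R] u -> 0 <= u ^+ j * (1 - u) ^+ (n - j).
  by rewrite /= in_itv /= => /andP[u_ge0 u_le1]; rewrite mulr_ge0 ?exprn_ge0 ?subr_ge0.
rewrite /Y_t2_tail -sumEFin; under eq_integral do rewrite -sumEFin.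
rewrite ge0_integral_sum //; first last.
- by move=> j u /X_ge0 ?; rewrite lee_fin mulr_ge0.
- move=> j; apply/measurable_EFinP/measurable_funTS/measurable_funM => //.
  exact: mX.
apply: eq_bigr => j _; under eq_integral do rewrite EFinM.
rewrite ge0_integralZl ?lee_fin //; first by rewrite integral_XMonemX -EFinM.
- by apply/measurable_EFinP/measurable_funTS; exact: mX.
- by move=> u /X_ge0; rewrite lee_fin.
Qed.

Lemma bin_fact_succ m j : (j <= m)%N ->
  ('C(m, j) * (j`! * (m.+1 - j)`!) * (m.+1 * m.+2) = (m.+1 - j) * m.+2`!)%N.
Proof.
move=> j_le; rewrite subSn // [(m - j).+1`!]factS [m.+2`!]factS [m.+1`!]factS.
by rewrite -(bin_fact j_le); ring.
Qed.

Lemma binomial_beta_term (F : numFieldType) (n j : nat) : (j < n)%N ->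
  'C(n.-1, j)%:R * ((j`! * (n - j)`!)%:R / (j + (n - j)).+1`!%:R) =
  (n - j)%:R / (n * (n + 1))%:R :> F.
Proof.
case: n => [//|m] j_lt; rewrite subnKC ?(ltnW j_lt) // addn1 mulrA -natrM.
apply/eqP; rewrite eqr_div; first by rewrite -!natrM eqr_nat bin_fact_succ.
  by rewrite pnatr_eq0 -lt0n fact_gt0.
by rewrite pnatr_eq0 muln_eq0.
Qed.

Lemma sum_subn_triangular n k : (k <= n)%N ->
  (2 * \sum_(j < k) (n - j) + (n - k) * (n - k + 1) = n * (n + 1))%N.
Proof.
elim: k => [|k IH] k_le; first by rewrite big_ord0 subn0.
rewrite big_ord_recr /= mulnDr -addnA -(IH (ltnW k_le)); congr (_ + _)%N.
have -> : (n - k = (n - k.+1).+1)%N by lia.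
nia.
Qed.

Lemma mean_closed_form (F : numFieldType) (n k : nat) (T : F) :
  (0 < n)%N -> (k <= n)%N ->
  T * \sum_(j < k) (n - j)%:R / (n * (n + 1))%:R =
  T / 2 - ((n - k) * (n - k + 1))%:R * T / (2 * n * (n + 1))%:R.
Proof.
move=> n_gt0 k_le.
have nz : (n * (n + 1))%:R != 0 :> F.
  by rewrite pnatr_eq0 muln_eq0 negb_or -lt0n n_gt0 addn1.
have := congr1 (fun m => m%:R : F) (sum_subn_triangular k_le).
rewrite /= natrD [(2 * _)%:R]natrM natr_sum => sum_eq.
rewrite -big_distrl /= -[(2 * n * (n + 1))%N]mulnA [(2 * _)%:R]natrM -sum_eq.
rewrite -sum_eq natrM natrD in nz.
by field.
Qed.

Theorem corollary4 (d : measure_display) (Omega : measurableType d) (R : realType)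
  (P : probability Omega R) (n k : nat) (T : R) (hT : 0 < T) (t : 'I_n)
  (X : 'I_n -> {RV P >-> R}) :
  (2 <= n)%N -> (1 <= k <= n - 1)%N ->
  mutually_independent X ->
  (forall i, uniform_on_0T hT (X i)) ->
  ('E_P[Y_t2 k X t] =
     (T / 2 - ((n - k) * (n - k + 1))%:R * T / (2 * n * (n + 1))%:R)%:E)%E.
Proof.
move=> _ k_range X_indep X_unif.
have k_range' : (0 < k <= n.-1)%N by rewrite -subn1.
have Y_ge0 := Y_t2_ge0_ae k t X_unif.
rewrite (expectation_ccdf_scaled hT (measurable_Y_t2 t X k_range') Y_ge0).
rewrite (integral_prob_Y_t2_gt t k_range' X_unif X_indep) integral_Y_t2_tail -EFinM.
congr EFin; rewrite (eq_bigr (fun j : 'I_k => (n - j)%:R / (n * (n + 1))%:R)).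
  by apply: mean_closed_form; lia.
by move=> j _; apply: binomial_beta_term; have := ltn_ord j; lia.
Qed.
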